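(* Let $P,K:\mathbb{N}_0\to\mathbb{N}_0$ be a scaling with $\lim_{n\to\infty}K_n^2/P_n=0$, and let $p:\mathbb{N}_0\to[0,1]$ satisfy $p_n\sim 1-q(\theta_n)$. Then $$\frac{C_{\rm K}(\theta_n)}{p_n}\sim 1+\frac{P_n}{K_n^3}.$$
   Context: For positive integers $K\le P$, $\theta=(K,P)$: $q(\theta)=\binom{P-K}{K}/\binom{P}{K}$ if $2K\le P$ and $0$ otherwise; $r(\theta)=\binom{P-2K}{K}/\binom{P}{K}$ if $3K\le P$ and $0$ otherwise; $\beta(\theta)=(1-q)^3+q^3-qr$; $C_{\rm K}(\theta)=\beta(\theta)/(1-q(\theta))^2$ is the clustering coefficient $\mathbb{P}[E_{12}\mid E_{13}\cap E_{23}]$ of the random key graph (nodes receive i.i.d. uniform $K$-subsets of $\{1,\dots,P\}$, adjacent iff subsets intersect). $p_n$ equals the clustering coefficient $C_{\rm ER}(p_n)$ of the Erdős–Rényi graph $\mathbb{G}(n;p_n)$. A scaling is a pair $P,K:\mathbb{N}_0\to\mathbb{N}_0$ with $1\le K_n\le P_n$, and $\theta_n=(K_n,P_n)$; $a_n\sim b_n$ means $a_n/b_n\to1$. *)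

From Stdlib Require Import Reals Arith.
Open Scope R_scope.

Definition q_key (K P : nat) : R :=
  if (2 * K <=? P)%nat then C (P - K) K / C P K else 0.

Definition r_key (K P : nat) : R :=
  if (3 * K <=? P)%nat then C (P - 2 * K) K / C P K else 0.

Definition beta_key (K P : nat) : R :=
  let q := q_key K P in
  (1 - q) ^ 3 + q ^ 3 - q * r_key K P.

Definition CK (K P : nat) : R := beta_key K P / (1 - q_key K P) ^ 2.

Definition asym_eq (a b : nat -> R) : Prop := Un_cv (fun n => a n / b n) 1.

(* Writing a_i = K / (P - i), the binomial ratios are finite products
   q = prod_(i<K) (1 - a_i) and r = prod_(i<K) (1 - 2 a_i), with
   a_i = K/P (1 + O(K/P)).  Bernoulli-type bounds then give, with t = K^2/P,
   1 - q = t (1 + O(t)), and the identity (1 - a)^2 = (1 - 2a) (1 + a^2/(1 - 2a))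
   gives q^2 - r = r (prod_(i<K) (1 + a_i^2/(1 - 2 a_i)) - 1) = (K^3/P^2) (1 + O(t)).
   Since C_K = (1 - q) + q (q^2 - r) / (1 - q)^2, we get
   C_K / (1 - q) = 1 + (P/K^3) (1 + O(t)), and p ~ 1 - q finishes the proof. *)

From Stdlib Require Import Reals Arith Lra Lia Psatz.
From Coquelicot Require Import Rcomplements Rbar Lim_seq Hierarchy.
Open Scope R_scope.

Fixpoint prodR (f : nat -> R) (k : nat) : R :=
  match k with O => 1 | S k => prodR f k * f k end.

Lemma prodR_ext f g k :
  (forall i, (i < k)%nat -> f i = g i) -> prodR f k = prodR g k.
Proof.
  induction k as [|k IH]; intros Hfg; simpl; [reflexivity|].
  rewrite IH, Hfg; auto.
Qed.

Lemma prodR_mult f g k : prodR (fun i => f i * g i) k = prodR f k * prodR g k.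
Proof. induction k as [|k IH]; simpl; [ring | rewrite IH; ring]. Qed.

Lemma prodR_div f g k : prodR (fun i => f i / g i) k = prodR f k / prodR g k.
Proof.
  induction k as [|k IH]; simpl; [field | rewrite IH].
  unfold Rdiv; rewrite Rinv_mult; ring.
Qed.

Lemma prodR_bounds f k lo hi :
  0 <= lo -> (forall i, (i < k)%nat -> lo <= f i <= hi) ->
  lo ^ k <= prodR f k <= hi ^ k.
Proof.
  intros Hlo; induction k as [|k IH]; intros Hf; simpl; [lra|].
  destruct IH as [IHlo IHhi]; [intros; apply Hf; lia|].
  destruct (Hf k (Nat.lt_succ_diag_r k)) as [Hk1 Hk2].
  assert (0 <= lo ^ k) by (apply pow_le; lra).
  split; rewrite Rmult_comm; apply Rmult_le_compat; lra.
Qed.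

Lemma fact_falling n k : (k <= n)%nat ->
  INR (fact n) = INR (fact (n - k)) * prodR (fun i => INR n - INR i) k.
Proof.
  induction k as [|k IH]; intros Hk; simpl; [rewrite Nat.sub_0_r; ring|].
  rewrite IH by lia.
  replace (n - k)%nat with (S (n - S k)) by lia.
  rewrite fact_simpl, mult_INR, S_INR, minus_INR by lia.
  rewrite S_INR. ring.
Qed.

Lemma C_mul_fact n k : (k <= n)%nat ->
  C n k * INR (fact k) = prodR (fun i => INR n - INR i) k.
Proof.
  intros Hk. unfold C. rewrite (fact_falling n k Hk).
  assert (INR (fact k) <> 0) by apply INR_fact_neq_0.
  assert (INR (fact (n - k)) <> 0) by apply INR_fact_neq_0.
  field; auto.
Qed.

Lemma C_ratio_prod m K P : (m + K <= P)%nat ->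
  C (P - m) K / C P K = prodR (fun i => 1 - INR m / (INR P - INR i)) K.
Proof.
  intros HmKP.
  assert (HfK : INR (fact K) <> 0) by apply INR_fact_neq_0.
  assert (HCP : C P K <> 0).
  { intros H0. apply (INR_fact_neq_0 P).
    rewrite (fact_falling P K), <- C_mul_fact, H0 by lia. ring. }
  replace (C (P - m) K / C P K)
    with (C (P - m) K * INR (fact K) / (C P K * INR (fact K))) by (field; auto).
  rewrite !C_mul_fact, <- prodR_div by lia.
  apply prodR_ext; intros i Hi.
  assert (INR i < INR P) by (apply lt_INR; lia).
  rewrite minus_INR by lia. field. lra.
Qed.

Lemma q_key_prod K P : (2 * K <= P)%nat ->
  q_key K P = prodR (fun i => 1 - INR K / (INR P - INR i)) K.
Proof.
  intros H. unfold q_key. rewrite (proj2 (Nat.leb_le _ _) H).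
  apply C_ratio_prod. lia.
Qed.

Lemma r_key_prod K P : (3 * K <= P)%nat ->
  r_key K P = prodR (fun i => 1 - 2 * (INR K / (INR P - INR i))) K.
Proof.
  intros H. unfold r_key. rewrite (proj2 (Nat.leb_le _ _) H).
  rewrite C_ratio_prod by lia. rewrite mult_INR.
  apply prodR_ext; intros i _. unfold Rdiv. simpl. ring.
Qed.

Lemma pow_one_sub_ge x n : x <= 1 -> 1 - INR n * x <= (1 - x) ^ n.
Proof.
  intros Hx. induction n as [|n IH]; [simpl; lra|]. rewrite S_INR; simpl.
  assert (0 <= INR n) by apply pos_INR.
  assert ((1 - INR n * x) * (1 - x) <= (1 - x) ^ n * (1 - x))
    by (apply Rmult_le_compat_r; lra).
  nra.
Qed.

Lemma pow_one_sub_le x n : 0 <= x <= 1 ->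
  (1 - x) ^ n <= 1 - INR n * x + (INR n * x) ^ 2 / 2.
Proof.
  intros Hx. induction n as [|n IH]; [simpl; lra|]. rewrite S_INR; simpl.
  assert (0 <= INR n) by apply pos_INR.
  assert ((1 - x) ^ n * (1 - x) <= (1 - INR n * x + (INR n * x) ^ 2 / 2) * (1 - x))
    by (apply Rmult_le_compat_r; lra).
  assert (0 <= INR n ^ 2 * x ^ 3) by (apply Rmult_le_pos; [nra | apply pow_le; lra]).
  nra.
Qed.

Lemma pow_one_add_mul_le c n : 0 <= c -> (1 + c) ^ n * (1 - INR n * c) <= 1.
Proof.
  intros Hc. induction n as [|n IH]; [simpl; lra|]. rewrite S_INR; simpl.
  assert (0 <= INR n) by apply pos_INR.
  assert (0 <= (1 + c) ^ n) by (apply pow_le; lra).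
  assert (0 <= (1 + c) ^ n * ((INR n + 1) * c ^ 2)) by (apply Rmult_le_pos; nra).
  nra.
Qed.


Section SmallDensity.

Variables K P : nat.
Hypothesis K_pos : (1 <= K)%nat.
Hypothesis K_le_P : (K <= P)%nat.
(* Any small constant would do; this one forces 3 K <= P, so q_key and r_key
   are the binomial ratios, and keeps the error constants below small. *)
Hypothesis density_small : INR K ^ 2 / INR P <= / 100.

Local Notation k := (INR K).
Local Notation y := (INR P).
Local Notation s := (INR K / INR P).
Local Notation t := (INR K ^ 2 / INR P).
Local Notation a i := (INR K / (INR P - INR i)).
Local Notation q := (q_key K P).
Local Notation r := (r_key K P).

Lemma density_scales : 1 <= k /\ 100 * k <= y /\ 0 < s <= t /\ t = k * s.
Proof.
  assert (Hk : 1 <= k) by (apply (le_INR 1); exact K_pos).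
  assert (Hy : 0 < y) by (apply (lt_INR 0); lia).
  assert (Ht : t * y = k ^ 2) by (field; lra).
  assert (Hs : 0 < s) by (apply Rdiv_lt_0_compat; lra).
  assert (Hst : t = k * s) by (field; lra).
  repeat split; nra.
Qed.

Lemma three_K_le_P : (3 * K <= P)%nat.
Proof.
  destruct density_scales as (Hk & Hy & _).
  apply INR_le. rewrite mult_INR. simpl. nra.
Qed.

Lemma K_div_P_sub_i_bounds i : (i < K)%nat -> s <= a i <= s / (1 - s).
Proof.
  intros Hi. destruct density_scales as (Hk & Hy & Hs & _).
  assert (Hik : INR i + 1 <= k) by (rewrite <- S_INR; apply le_INR; lia).
  assert (Hi0 : 0 <= INR i) by apply pos_INR.
  replace (s / (1 - s)) with (k / (y - k)) by (field; nra).
  split; unfold Rdiv; apply Rmult_le_compat_l; try lra;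
    apply Rinv_le_contravar; nra.
Qed.

Lemma odds_bounds : 0 < s / (1 - s) <= / 50.
Proof.
  destruct density_scales as (Hk & Hy & Hs & _).
  assert (Hu : s / (1 - s) * (1 - s) = s) by (field; lra).
  assert (Hu0 : 0 < s / (1 - s)) by (apply Rdiv_lt_0_compat; lra).
  assert (Hs1 : s <= / 100) by lra.
  set (u := s / (1 - s)) in *. set (v := s) in *. nra.
Qed.

Lemma one_sub_q_key_bounds : t - t ^ 2 / 2 <= 1 - q <= t / (1 - s).
Proof.
  destruct density_scales as (Hk & Hy & Hs & Hts).
  pose proof odds_bounds.
  destruct (prodR_bounds (fun i => 1 - a i) K (1 - s / (1 - s)) (1 - s))
    as [Hlo Hhi]; [lra | intros i Hi; pose proof (K_div_P_sub_i_bounds i Hi); lra |].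
  rewrite <- q_key_prod in Hlo, Hhi by (pose proof three_K_le_P; lia).
  pose proof (pow_one_sub_ge (s / (1 - s)) K ltac:(lra)) as B1.
  pose proof (pow_one_sub_le s K ltac:(lra)) as B2.
  replace (k * (s / (1 - s))) with (t / (1 - s)) in B1 by (rewrite Hts; field; lra).
  rewrite <- Hts in B2.
  split; lra.
Qed.

Lemma one_sub_q_key_ratio_close : Rabs ((1 - q) / t - 1) <= 2 * t.
Proof.
  destruct density_scales as (Hk & Hy & Hs & Hts).
  destruct one_sub_q_key_bounds as [Hlo Hhi].
  assert (Hu : t / (1 - s) * (1 - s) = t) by (field; lra).
  assert (Hv : (1 - q) / t * t = 1 - q) by (field; lra).
  set (u := t / (1 - s)) in *. set (v := (1 - q) / t) in *.
  set (e := 1 - q) in *.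
  apply Rabs_le. nra.
Qed.

Lemma r_key_bounds : 1 - 3 * t <= r <= 1.
Proof.
  destruct density_scales as (Hk & Hy & Hs & Hts).
  pose proof odds_bounds.
  destruct (prodR_bounds (fun i => 1 - 2 * a i) K (1 - 2 * (s / (1 - s))) 1)
    as [Hlo Hhi]; [lra | intros i Hi; pose proof (K_div_P_sub_i_bounds i Hi); lra |].
  rewrite <- r_key_prod in Hlo, Hhi by exact three_K_le_P. rewrite pow1 in Hhi.
  pose proof (pow_one_sub_ge (2 * (s / (1 - s))) K ltac:(lra)) as B.
  replace (k * (2 * (s / (1 - s)))) with (2 * (t / (1 - s))) in B
    by (rewrite Hts; field; lra).
  assert (Hw : t / (1 - s) * (1 - s) = t) by (field; lra).
  set (w := t / (1 - s)) in *. nra.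
Qed.

Local Notation G := (prodR (fun i => 1 + a i ^ 2 / (1 - 2 * a i)) K).

Lemma q_key_sq : q ^ 2 = r * G.
Proof.
  rewrite q_key_prod, r_key_prod, <- prodR_mult
    by (pose proof three_K_le_P; lia).
  rewrite <- Rsqr_pow2. unfold Rsqr. rewrite <- prodR_mult.
  apply prodR_ext; intros i Hi.
  destruct density_scales as (Hk & Hy & _).
  assert (INR i <= k) by (apply le_INR; lia).
  field. lra.
Qed.

Lemma excess_prod_bounds :
  s * t <= G - 1 <= s * t / ((1 - s) * (1 - 3 * s) - s * t).
Proof.
  destruct density_scales as (Hk & Hy & Hs & Hts).
  pose proof odds_bounds as Hu.
  set (u := s / (1 - s)) in *.
  set (c := u ^ 2 / (1 - 2 * u)).
  assert (Hc : c * (1 - 2 * u) = u ^ 2) by (unfold c; field; nra).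
  assert (Hfac : forall i, (i < K)%nat ->
            1 + s ^ 2 <= 1 + a i ^ 2 / (1 - 2 * a i) <= 1 + c).
  { intros i Hi. pose proof (K_div_P_sub_i_bounds i Hi) as Ha. fold u in Ha.
    assert (INR i <= k) by (apply le_INR; lia).
    assert (Hd : a i ^ 2 / (1 - 2 * a i) * (1 - 2 * a i) = a i ^ 2)
      by (field; lra).
    set (d := a i ^ 2 / (1 - 2 * a i)) in *. set (x := a i) in *.
    assert (Hd0 : 0 <= d) by nra.
    assert (Hc0 : 0 <= c) by nra.
    split; nra. }
  destruct (prodR_bounds (fun i => 1 + a i ^ 2 / (1 - 2 * a i)) K (1 + s ^ 2) (1 + c))
    as [Hlo Hhi];
    [nra | exact Hfac |].
  pose proof (poly K (s ^ 2) ltac:(nra)) as B1.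
  replace (k * s ^ 2) with (s * t) in B1 by (rewrite Hts; ring).
  pose proof (pow_one_add_mul_le c K ltac:(nra)) as B2.
  set (m := (1 - s) * (1 - 3 * s)).
  assert (Hm : / 2 <= m <= 1) by (unfold m; nra).
  assert (Hkc : k * c = s * t / m) by (unfold m, c, u; rewrite Hts; field; lra).
  rewrite Hkc in B2.
  assert (Hx : 0 < s * t <= / 4) by nra.
  set (x := s * t) in *.
  assert (Hwm : x / m * m = x) by (field; lra).
  replace (x / (m - x)) with (x / m / (1 - x / m)) by (field; lra).
  set (w := x / m) in *.
  assert (Hw : 0 <= w <= / 2) by nra.
  assert (HG : G * (1 - w) <= 1).
  { apply Rle_trans with ((1 + c) ^ K * (1 - w)); [|exact B2].
    apply Rmult_le_compat_r; lra. }
  split; [lra|].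
  apply (Rmult_le_reg_r (1 - w)); [lra|].
  replace (w / (1 - w) * (1 - w)) with w by (field; lra).
  lra.
Qed.

Lemma q_key_sq_sub_r_key_ratio_close :
  Rabs ((q ^ 2 - r) / (s * t) - 1) <= 10 * t.
Proof.
  destruct density_scales as (Hk & Hy & Hs & Hts).
  destruct r_key_bounds as [Hr1 Hr2].
  destruct excess_prod_bounds as [He1 He2].
  rewrite q_key_sq.
  replace (r * G - r) with (r * (G - 1)) by ring.
  set (e := G - 1) in *.
  set (x := s * t) in *.
  set (D := (1 - s) * (1 - 3 * s) - x) in *.
  assert (Hx : 0 < x <= t * t) by (unfold x; nra).
  assert (HD : 1 - 5 * t <= D) by (unfold D; nra).
  assert (Hz : x / D * D = x) by (field; lra).
  assert (Hv : r * e / x * x = r * e) by (field; lra).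
  set (z := x / D) in *. set (v := r * e / x) in *.
  assert (Hz1 : z <= x * (1 + 10 * t)) by nra.
  apply Rabs_le. nra.
Qed.

End SmallDensity.

Lemma is_lim_seq_close_to_1 (x t : nat -> R) (c : R) :
  is_lim_seq t 0 -> eventually (fun n => Rabs (x n - 1) <= c * t n) ->
  is_lim_seq x 1.
Proof.
  intros Ht Hx.
  pose proof (is_lim_seq_mult' _ _ c 0 (is_lim_seq_const c) Ht) as Hct.
  rewrite Rmult_0_r in Hct.
  apply (is_lim_seq_le_le_loc (fun n => 1 - c * t n) _ (fun n => 1 + c * t n)).
  - apply (filter_imp _ _ (fun n Hn => proj1 (Rabs_le_between' _ _ _) Hn) Hx).
  - pose proof (is_lim_seq_minus' _ _ 1 0 (is_lim_seq_const 1) Hct) as H.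
    rewrite Rminus_0_r in H. exact H.
  - pose proof (is_lim_seq_plus' _ _ 1 0 (is_lim_seq_const 1) Hct) as H.
    rewrite Rplus_0_r in H. exact H.
Qed.

Lemma is_lim_seq_pow (u : nat -> R) (l : R) (m : nat) :
  is_lim_seq u l -> is_lim_seq (fun n => u n ^ m) (l ^ m).
Proof.
  intros Hu. induction m as [|m IH]; simpl; [apply is_lim_seq_const|].
  apply is_lim_seq_mult'; assumption.
Qed.

Lemma is_lim_seq_bounded_mult_0 (u v : nat -> R) (M : R) :
  (forall n, Rabs (u n) <= M) -> is_lim_seq v 0 ->
  is_lim_seq (fun n => u n * v n) 0.
Proof.
  intros Hu Hv. apply is_lim_seq_abs_0.
  apply is_lim_seq_abs_0 in Hv.
  pose proof (is_lim_seq_mult' _ _ M 0 (is_lim_seq_const M) Hv) as HMv.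
  rewrite Rmult_0_r in HMv.
  refine (is_lim_seq_le_le (fun _ => 0) _ _ 0 _ (is_lim_seq_const 0) HMv).
  intros n. split; [apply Rabs_pos|].
  rewrite Rabs_mult. apply Rmult_le_compat_r; [apply Rabs_pos | apply Hu].
Qed.

(* With e = 1 - q: C_K = e + q (q^2 - r) / e^2, and P/K^3 = s t / t^3. *)
Lemma clustering_ratio_eq (k y q r : R) : 0 < k -> 0 < y -> q <> 1 ->
  ((1 - q) ^ 3 + q ^ 3 - q * r) / (1 - q) ^ 2 / ((1 - q) * (1 + y / k ^ 3)) =
  1 + y / k ^ 3 / (1 + y / k ^ 3) *
      (q * ((q ^ 2 - r) / (k / y * (k ^ 2 / y))) / ((1 - q) / (k ^ 2 / y)) ^ 3 - 1).
Proof.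
  intros Hk Hy Hq.
  assert (0 < k ^ 3) by (apply pow_lt; exact Hk).
  assert (0 < y / k ^ 3) by (apply Rdiv_lt_0_compat; assumption).
  field. repeat split; lra.
Qed.

Section Scaling.

Variables K P : nat -> nat.
Hypothesis scaling : forall n, (1 <= K n)%nat /\ (K n <= P n)%nat.
Hypothesis density_to_0 : is_lim_seq (fun n => INR (K n) ^ 2 / INR (P n)) 0.

Local Notation s n := (INR (K n) / INR (P n)).
Local Notation t n := (INR (K n) ^ 2 / INR (P n)).
Local Notation q n := (q_key (K n) (P n)).
Local Notation r n := (r_key (K n) (P n)).

Lemma eventually_density_small : eventually (fun n => t n <= / 100).
Proof.
  apply is_lim_seq_spec in density_to_0.
  assert (Heps : 0 < / 100) by lra.
  refine (filter_imp _ _ _ (density_to_0 (mkposreal _ Heps))); intros n Hn.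
  simpl in Hn. rewrite Rminus_0_r in Hn. apply Rabs_def2 in Hn. lra.
Qed.

Lemma lim_one_sub_q_key_ratio : is_lim_seq (fun n => (1 - q n) / t n) 1.
Proof.
  apply (is_lim_seq_close_to_1 _ _ 2 density_to_0).
  refine (filter_imp _ _ _ eventually_density_small); intros n Hn.
  destruct (scaling n). apply one_sub_q_key_ratio_close; assumption.
Qed.

Lemma lim_q_key_sq_sub_r_key_ratio :
  is_lim_seq (fun n => (q n ^ 2 - r n) / (s n * t n)) 1.
Proof.
  apply (is_lim_seq_close_to_1 _ _ 10 density_to_0).
  refine (filter_imp _ _ _ eventually_density_small); intros n Hn.
  destruct (scaling n). apply q_key_sq_sub_r_key_ratio_close; assumption.
Qed.

Lemma lim_q_key : is_lim_seq (fun n => q n) 1.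
Proof.
  assert (Ht : forall n, 0 < t n).
  { intros n. destruct (scaling n).
    assert (1 <= INR (K n)) by (apply (le_INR 1); assumption).
    assert (INR (K n) <= INR (P n)) by (apply le_INR; assumption).
    apply Rdiv_lt_0_compat; nra. }
  pose proof (is_lim_seq_minus' _ _ 1 (1 * 0) (is_lim_seq_const 1)
                (is_lim_seq_mult' _ _ 1 0 lim_one_sub_q_key_ratio density_to_0)) as H.
  replace (1 - 1 * 0) with 1 in H by ring.
  refine (is_lim_seq_ext _ _ _ _ H); intros n.
  specialize (Ht n). set (T := t n) in *. field. lra.
Qed.

Lemma lim_CK_ratio :
  is_lim_seq (fun n => CK (K n) (P n) /
                        ((1 - q n) * (1 + INR (P n) / INR (K n) ^ 3))) 1.
Proof.
  set (a n := (1 - q n) / t n).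
  set (b n := (q n ^ 2 - r n) / (s n * t n)).
  set (Y n := INR (P n) / INR (K n) ^ 3).
  assert (HX : is_lim_seq (fun n => q n * b n / a n ^ 3 - 1) 0).
  { pose proof (is_lim_seq_div' _ _ _ _
      (is_lim_seq_mult' _ _ _ _ lim_q_key lim_q_key_sq_sub_r_key_ratio)
      (is_lim_seq_pow _ _ 3 lim_one_sub_q_key_ratio) ltac:(simpl; lra)) as H.
    pose proof (is_lim_seq_minus' _ _ _ _ H (is_lim_seq_const 1)) as H1.
    replace (1 * 1 / 1 ^ 3 - 1) with 0 in H1 by (simpl; field). exact H1. }
  assert (HY : forall n, Rabs (Y n / (1 + Y n)) <= 1).
  { intros n. destruct (scaling n).
    assert (1 <= INR (K n)) by (apply (le_INR 1); assumption).
    assert (0 < INR (K n) ^ 3) by (apply pow_lt; lra).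
    assert (0 <= Y n) by (apply Rdiv_le_0_compat; [apply pos_INR | assumption]).
    rewrite Rabs_right by (apply Rle_ge, Rdiv_le_0_compat; lra).
    apply (Rdiv_le_1 (Y n)); lra. }
  pose proof (is_lim_seq_plus' _ _ 1 0 (is_lim_seq_const 1)
                (is_lim_seq_bounded_mult_0 _ _ 1 HY HX)) as H.
  rewrite Rplus_0_r in H.
  refine (is_lim_seq_ext_loc _ _ _ _ H).
  refine (filter_imp _ _ _ eventually_density_small); intros n Hn.
  destruct (scaling n) as [HK HKP].
  destruct (one_sub_q_key_bounds _ _ HK HKP Hn).
  destruct (density_scales _ _ HK HKP Hn) as (Hk & Hy & Hs & _).
  unfold CK, beta_key, a, b, Y. cbv zeta.
  symmetry. apply clustering_ratio_eq; nra.
Qed.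

End Scaling.

Theorem corollary3 (P K : nat -> nat) (p : nat -> R) :
  (forall n, (1 <= K n)%nat /\ (K n <= P n)%nat) ->
  Un_cv (fun n => (INR (K n)) ^ 2 / INR (P n)) 0 ->
  (forall n, 0 <= p n <= 1) ->
  asym_eq p (fun n => 1 - q_key (K n) (P n)) ->
  asym_eq (fun n => CK (K n) (P n) / p n)
          (fun n => 1 + INR (P n) / (INR (K n)) ^ 3).
Proof.
  intros scaling density_to_0 _ Hp.
  apply is_lim_seq_Reals in density_to_0.
  apply is_lim_seq_Reals in Hp.
  apply is_lim_seq_Reals.
  assert (Hqp : is_lim_seq (fun n => (1 - q_key (K n) (P n)) / p n) 1).
  { apply is_lim_seq_inv in Hp; [|intros E; injection E; apply R1_neq_R0].
    simpl in Hp. rewrite Rinv_1 in Hp.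
    refine (is_lim_seq_ext _ _ _ _ Hp); intros n. apply Rinv_div. }
  pose proof (is_lim_seq_mult' _ _ _ _ Hqp (lim_CK_ratio K P scaling density_to_0)) as H.
  rewrite Rmult_1_l in H.
  refine (is_lim_seq_ext_loc _ _ _ _ H).
  refine (filter_imp _ _ _ (eventually_density_small K P density_to_0)); intros n Hn.
  destruct (scaling n) as [HK HKP].
  destruct (one_sub_q_key_bounds _ _ HK HKP Hn).
  destruct (density_scales _ _ HK HKP Hn) as (Hk & Hy & Hs & _).
  assert (0 < INR (K n) ^ 3) by (apply pow_lt; lra).
  assert (0 <= INR (P n) / INR (K n) ^ 3) by (apply Rdiv_le_0_compat; lra).
  (* p n may vanish (then / p n = 0), so keep / p n as an opaque factor. *)
  set (ip := / p n). unfold Rdiv. rewrite Rinv_mult. fold ip.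
  field. nra.
Qed.
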